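(* Let $\mathcal{A}=\{\alpha_1<\alpha_2<\dots<\alpha_m\}\subset(0,1)$ with $|\mathcal{A}|=m$, and let $d_{\mathcal{A}}=\min_{\alpha\in\mathcal{A}}\min(\alpha,1-\alpha)$. Let $(b_t)_{t\ge1}$ be any sequence of base forecasts with $b_t\in\mathcal{K}$ and $(y_t)_{t\ge1}$ any sequence of real outcomes, and suppose there is $R>0$ with $|y_t-b_t^{\alpha}|\le R$ for all $\alpha\in\mathcal{A}$ and all $t$. Run MultiQT with learning rate $\eta>0$ and initial hidden offset $\tilde\theta_1\in\mathcal{K}$. Then for every $T\ge1$ and every $\alpha\in\mathcal{A}$, $$\Bigg|\frac{1}{T}\sum_{t=1}^T \mathrm{cov}_t^{\alpha}-\alpha\Bigg|\le \frac{2\|\tilde\theta_1\|_2}{\eta T}+\sqrt{\frac{|\mathcal{A}|}{T}+\frac{2R|\mathcal{A}|^{3/2}}{\eta\, d_{\mathcal{A}}\,T}}.$$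
   Context: $\mathcal{K}=\{x\in\mathbb{R}^m: x_1\le x_2\le\dots\le x_m\}$ (coordinates indexed by $\alpha_1,\dots,\alpha_m$), and for a closed convex set $C$, $\Pi_C(x)=\arg\min_{z\in C}\|x-z\|_2^2$ is Euclidean projection; $C-v=\{x-v:x\in C\}$. MultiQT (Multi-Level Quantile Tracker) with learning rate $\eta>0$ and initial hidden offset $\tilde\theta_1\in\mathcal{K}$: for $t=1,2,\dots$, (1) set the played offset $\theta_t=\Pi_{\mathcal{K}-b_t}(\tilde\theta_t)$; (2) output the forecast $q_t=b_t+\theta_t$ (equivalently $q_t=\Pi_{\mathcal{K}}(b_t+\tilde\theta_t)$); (3) after observing $y_t$, set $\mathrm{cov}_t^{\alpha}=\mathbb{1}\{y_t\le q_t^{\alpha}\}$ and update $\tilde\theta_{t+1}^{\alpha}=\tilde\theta_t^{\alpha}-\eta(\mathrm{cov}_t^{\alpha}-\alpha)$ for each $\alpha\in\mathcal{A}$. *)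

From HB Require Import structures.
From mathcomp Require Import all_boot all_order all_algebra.
From mathcomp Require Import reals.
Set Implicit Arguments. Unset Strict Implicit. Unset Printing Implicit Defensive.
Import Order.TTheory GRing.Theory Num.Theory.
Local Open Scope ring_scope.

Section MultiQT.
Variables (R : realType) (m : nat).

(* vectors in R^m, coordinates indexed by 'I_m (i.e. alpha_1..alpha_m) *)
Definition vec := 'I_m -> R.

Definition inK (x : vec) : Prop := forall i j : 'I_m, (i <= j)%N -> x i <= x j.

Definition sqnorm (x : vec) : R := \sum_(i < m) (x i) ^+ 2.
Definition norm2 (x : vec) : R := Num.sqrt (sqnorm x).

Definition inKshift (b z : vec) : Prop := inK (fun i => z i + b i).

Definition is_proj_Kshift (b v p : vec) : Prop :=
  inKshift b p /\
  forall z : vec, inKshift b z ->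
    sqnorm (fun i => v i - p i) <= sqnorm (fun i => v i - z i).

Definition cov (y : R) (q : vec) (i : 'I_m) : R := (nat_of_bool (y <= q i))%:R.

(* A run of MultiQT. Time is 0-based: index t here is round t+1 of the paper.
   thtil t = hidden offset, th t = played offset, q t = forecast. *)
Definition multiqt_run (alpha : vec) (eta : R) (th1 : vec)
    (b : nat -> vec) (y : nat -> R)
    (thtil th q : nat -> vec) : Prop :=
  thtil 0%N = th1 /\
  forall t : nat,
    is_proj_Kshift (b t) (thtil t) (th t) /\
    (forall i, q t i = b t i + th t i) /\
    (forall i, thtil t.+1 i = thtil t i - eta * (cov (y t) (q t) i - alpha i)).

(* d_A = min_alpha min(alpha, 1 - alpha); the seed 1 is irrelevant when m > 0
   since every term is <= 1/2. *)
Definition dA (alpha : vec) : R :=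
  \big[Num.min/1]_(i < m) Num.min (alpha i) (1 - alpha i).

End MultiQT.

From HB Require Import structures.
From mathcomp Require Import all_boot all_order all_algebra.
From mathcomp Require Import reals.
From mathcomp Require Import ring lra.
Import Order.TTheory GRing.Theory Num.Theory.
Set Implicit Arguments. Unset Strict Implicit.
Local Open Scope ring_scope.

(* With g_t := cov_t - alpha, the hidden offset performs the gradient steps
   thtil_{t+1} = thtil_t - eta g_t, so the coverage error at alpha telescopes to
   (thtil_1 - thtil_{T+1})_alpha / (eta T), and it suffices to show that
   ||thtil_t||^2 grows at most linearly.  Expanding the square,
   ||thtil_{t+1}||^2 = ||thtil_t||^2 - 2 eta <thtil_t, g_t> + eta^2 ||g_t||^2,
   where ||g_t||^2 <= m and <thtil_t, g_t> = <thtil_t - theta_t, g_t> + <theta_t, g_t>.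
   The first term is nonnegative: moving the forecast q_t against g_t (up by
   s alpha below y_t, down by s (1 - alpha) above it) keeps it sorted for small
   s > 0 because alpha is increasing, so the optimality of the projection
   theta_t yields a variational inequality.  The second term is at least -R m
   since |y_t - b_t| <= R.  This gives the bound with 2 R m in place of
   2 R m^{3/2} / d_A, which is larger since d_A <= 1 <= sqrt m. *)

Section Vectors.
Variables (R : realType) (m : nat).
Implicit Types (u v w p : 'I_m -> R).

Definition dot u w : R := \sum_(i < m) u i * w i.

Lemma sqnorm_ge0 u : 0 <= sqnorm u.
Proof. by apply: sumr_ge0 => i _; apply: sqr_ge0. Qed.

Lemma sqnormDZ u w (s : R) :
  sqnorm (fun i => u i + s * w i) = sqnorm u + 2 * s * dot u w + s ^+ 2 * sqnorm w.
Proof.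
rewrite /sqnorm /dot !mulr_sumr -!big_split /=.
by apply: eq_bigr => i _; ring.
Qed.

Lemma sqnorm_le_card u : (forall i, u i ^+ 2 <= 1) -> sqnorm u <= m%:R.
Proof.
move=> u_le1; rewrite -[m in m%:R]card_ord -sumr_const.
exact: ler_sum.
Qed.

Lemma normr_coord_le_norm2 u i : `|u i| <= norm2 u.
Proof.
rewrite /norm2 -sqrtr_sqr ler_sqrt; last exact: sqnorm_ge0.
rewrite /sqnorm (bigD1 i) //= lerDl.
by apply: sumr_ge0 => j _; apply: sqr_ge0.
Qed.

Lemma norm2_le_sqrtD u (a c : R) :
  0 <= c -> sqnorm u <= a ^+ 2 + c -> 0 <= a -> norm2 u <= a + Num.sqrt c.
Proof.
move=> c_ge0 hu a_ge0; have sc_ge0 := sqrtr_ge0 c.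
rewrite /norm2 -(ger0_norm (addr_ge0 a_ge0 sc_ge0)) -sqrtr_sqr ler_sqrt;
  last exact: sqr_ge0.
have := sqr_sqrtr c_ge0; nra.
Qed.

Lemma proj_dot_ge0 (C : ('I_m -> R) -> Prop) v p w (s0 : R) :
  0 < s0 ->
  (forall z, C z -> sqnorm (fun i => v i - p i) <= sqnorm (fun i => v i - z i)) ->
  (forall s, 0 < s <= s0 -> C (fun i => p i - s * w i)) ->
  0 <= dot (fun i => v i - p i) w.
Proof.
move=> s0_gt0 p_min w_feasible.
set c := dot _ w; rewrite leNgt; apply/negP => c_lt0.
have G_ge0 := sqnorm_ge0 w.
set s := Num.min s0 (- c / (sqnorm w + 1)).
have s_gt0 : 0 < s by rewrite lt_min s0_gt0 divr_gt0 // ?oppr_gt0 //; lra.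
have sG_le : s * (sqnorm w + 1) <= - c.
  by rewrite -ler_pdivlMr; [rewrite ge_min lexx orbT | lra].
have s_feasible : C (fun i => p i - s * w i).
  by apply: w_feasible; rewrite s_gt0 ge_min lexx.
have := p_min _ s_feasible.
have -> : sqnorm (fun i => v i - (p i - s * w i))
        = sqnorm (fun i => (v i - p i) + s * w i).
  by apply: eq_bigr => i _; congr (_ ^+ 2); ring.
rewrite sqnormDZ -/c => h.
have : 0 <= s * (2 * c + s * sqnorm w) by nra.
rewrite pmulr_rge0 //; nra.
Qed.

End Vectors.

Section Coverage.
Variables (R : realType) (m : nat) (alpha : 'I_m -> R).
Hypothesis alpha_mono : {homo alpha : i j / (i <= j)%N >-> i <= j}.
Hypothesis alpha_01 : forall i, 0 <= alpha i <= 1.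

Lemma exists_gap_below (q : 'I_m -> R) (yt : R) :
  exists2 s0 : R, 0 < s0 & forall i, q i < yt -> s0 <= yt - q i.
Proof.
exists (\big[Num.min/1]_(i | q i < yt) (yt - q i)).
  apply: (big_ind (fun x => 0 < x)) => // [x z x_gt0 z_gt0|i].
    by rewrite lt_min x_gt0 z_gt0.
  by rewrite subr_gt0.
by move=> i qi_lt; rewrite (bigD1 i) //= ge_min lexx.
Qed.

Lemma inK_cov_step (q : 'I_m -> R) (yt s : R) :
  inK q -> 0 <= s -> (forall i, q i < yt -> s <= yt - q i) ->
  inK (fun i => q i - s * (cov yt q i - alpha i)).
Proof.
move=> q_sorted s_ge0 s_gap i j ij /=.
have qij := q_sorted i j ij; have aij := alpha_mono ij.
have : s * alpha i <= s * alpha j by exact: ler_wpM2l.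
rewrite /cov; case: (lerP yt (q i)) => yi; case: (lerP yt (q j)) => yj /=.
- lra.
- lra.
- have := s_gap i yi; lra.
- lra.
Qed.

Lemma proj_residual_dot_cov_ge0 (b v p q : 'I_m -> R) (yt : R) :
  is_proj_Kshift b v p -> (forall i, q i = b i + p i) ->
  0 <= dot (fun i => v i - p i) (fun i => cov yt q i - alpha i).
Proof.
move=> [p_in p_min] q_def.
have q_sorted : inK q by move=> i j ij; rewrite !q_def addrC [b j + _]addrC; exact: p_in.
have [s0 s0_gt0 s0_gap] := exists_gap_below q yt.
apply: (proj_dot_ge0 s0_gt0 p_min) => s /andP[s_gt0 s_le].
have gap : forall i, q i < yt -> s <= yt - q i.
  by move=> i /s0_gap; apply: le_trans.
move=> i j ij /=; have := inK_cov_step q_sorted (ltW s_gt0) gap ij.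
by rewrite /= !q_def; lra.
Qed.

Lemma played_dot_cov_ge (b p q : 'I_m -> R) (yt Rb : R) :
  (forall i, q i = b i + p i) -> (forall i, `|yt - b i| <= Rb) ->
  - (Rb * m%:R) <= dot p (fun i => cov yt q i - alpha i).
Proof.
move=> q_def y_near; rewrite -mulNr mulr_natr -[m in _ *+ m]card_ord -sumr_const.
apply: ler_sum => i _; have /andP[a0 a1] := alpha_01 i.
move: (y_near i); rewrite ler_norml /cov q_def => /andP[lo hi].
by case: (lerP yt (b i + p i)) => /= ?; nra.
Qed.

Lemma sqnorm_cov_sub_le (q : 'I_m -> R) (yt : R) :
  sqnorm (fun i => cov yt q i - alpha i) <= m%:R.
Proof.
apply: sqnorm_le_card => i; have /andP[a0 a1] := alpha_01 i.
by rewrite /cov; case: (yt <= q i) => /=; nra.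
Qed.

End Coverage.

Section Run.
Variables (R : realType) (m : nat) (alpha : 'I_m -> R) (eta Rb : R).
Variables (th1 : 'I_m -> R) (b : nat -> 'I_m -> R) (y : nat -> R).
Variables (thtil th q : nat -> 'I_m -> R).
Hypothesis alpha_mono : {homo alpha : i j / (i <= j)%N >-> i <= j}.
Hypothesis alpha_01 : forall i, 0 <= alpha i <= 1.
Hypothesis y_near : forall t i, `|y t - b t i| <= Rb.
Hypothesis Rb_ge0 : 0 <= Rb.
Hypothesis eta_gt0 : 0 < eta.
Hypothesis run : multiqt_run alpha eta th1 b y thtil th q.

Let growth : R := eta * (2 * Rb + eta) * m%:R.

Lemma sqnorm_hidden_step t : sqnorm (thtil t.+1) <= sqnorm (thtil t) + growth.
Proof.
have [_ /(_ t) [proj_t [q_def step]]] := run.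
set g := fun i => cov (y t) (q t) i - alpha i.
have -> : sqnorm (thtil t.+1) = sqnorm (fun i => thtil t i + (- eta) * g i).
  by apply: eq_bigr => i _; rewrite step mulNr.
have dot_split : dot (thtil t) g = dot (fun i => thtil t i - th t i) g + dot (th t) g.
  by rewrite /dot -big_split; apply: eq_bigr => i _ /=; ring.
have residual_ge0 := proj_residual_dot_cov_ge0 alpha_mono (y t) proj_t q_def.
have played_ge := played_dot_cov_ge alpha_01 q_def (y_near t).
have g_le : eta ^+ 2 * sqnorm g <= eta ^+ 2 * m%:R.
  by rewrite ler_wpM2l ?sqr_ge0 // sqnorm_cov_sub_le.
have descent : 0 <= eta * (dot (thtil t) g + Rb * m%:R).
  by apply: mulr_ge0; [exact: ltW | rewrite dot_split; lra].
rewrite sqnormDZ sqrrN /growth; lra.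
Qed.

Lemma sqnorm_hidden_le n : sqnorm (thtil n) <= sqnorm th1 + n%:R * growth.
Proof.
elim: n => [|n IH]; first by rewrite run.1 mul0r addr0.
by have := sqnorm_hidden_step n; rewrite -natr1; lra.
Qed.

Lemma hidden_offset_sum n i :
  thtil n i = th1 i - eta * \sum_(t < n) (cov (y t) (q t) i - alpha i).
Proof.
elim: n => [|n IH]; first by rewrite run.1 big_ord0 mulr0 subr0.
have [_ /(_ n) [_ [_ step]]] := run.
by rewrite step IH big_ord_recr /=; ring.
Qed.

Lemma coverage_error_eq T i : (0 < T)%N ->
  (\sum_(t < T) cov (y t) (q t) i) / T%:R - alpha i
    = (th1 i - thtil T i) / (eta * T%:R).
Proof.
rewrite -(ltr0n R) => T_gt0.
rewrite hidden_offset_sum sumrB sumr_const card_ord -mulr_natl.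
by field; rewrite !gt_eqF.
Qed.

Lemma coverage_error_le T i : (0 < T)%N ->
  `| (\sum_(t < T) cov (y t) (q t) i) / T%:R - alpha i |
    <= 2 * norm2 th1 / (eta * T%:R)
       + Num.sqrt (m%:R / T%:R + 2 * Rb * m%:R / (eta * T%:R)).
Proof.
move=> T_pos; have T_gt0 : 0 < T%:R :> R by rewrite ltr0n.
have eT_gt0 : 0 < eta * T%:R by exact: mulr_gt0.
have eta_ge0 := ltW eta_gt0.
have growth_ge0 : 0 <= growth by rewrite /growth !mulr_ge0 // addr_ge0 // mulr_ge0.
have N1_ge0 : 0 <= norm2 th1 by exact: sqrtr_ge0.
have hidden_le : norm2 (thtil T) <= norm2 th1 + Num.sqrt (T%:R * growth).
  apply: norm2_le_sqrtD => //; first exact: mulr_ge0 (ltW T_gt0) growth_ge0.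
  by rewrite sqr_sqrtr ?sqnorm_ge0 // sqnorm_hidden_le.
have diff_le : `|th1 i - thtil T i| <= 2 * norm2 th1 + Num.sqrt (T%:R * growth).
  have := normr_coord_le_norm2 th1 i; have := normr_coord_le_norm2 (thtil T) i.
  by move=> ? ?; apply: le_trans (ler_normB _ _) _; lra.
have sqrt_scale : Num.sqrt (T%:R * growth) / (eta * T%:R)
    = Num.sqrt (m%:R / T%:R + 2 * Rb * m%:R / (eta * T%:R)).
  have inv_sqrt : (eta * T%:R)^-1 = Num.sqrt ((eta * T%:R)^-1 ^+ 2).
    by rewrite sqrtr_sqr gtr0_norm ?invr_gt0.
  rewrite {1}inv_sqrt -sqrtrM ?(mulr_ge0 (ltW T_gt0)) //; congr Num.sqrt.
  by rewrite /growth; field; rewrite !gt_eqF.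
rewrite coverage_error_eq // normrM normfV (gtr0_norm eT_gt0) -sqrt_scale -mulrDl.
by rewrite ler_wpM2r // invr_ge0 ltW.
Qed.

End Run.

Lemma dA_gt0 (R : realType) (m : nat) (alpha : 'I_m -> R) :
  (forall i, 0 < alpha i < 1) -> 0 < dA alpha.
Proof.
move=> alpha_in; apply: (big_ind (fun x => 0 < x)) => // [x z x_gt0 z_gt0|i _].
  by rewrite lt_min x_gt0 z_gt0.
by have /andP[a0 a1] := alpha_in i; rewrite lt_min a0 subr_gt0.
Qed.

Lemma dA_le_sqrt_card (R : realType) (m : nat) (alpha : 'I_m -> R) :
  (0 < m)%N -> dA alpha <= Num.sqrt m%:R.
Proof.
move=> m_gt0; apply: (@le_trans _ _ 1).
  apply: (big_ind (fun x => x <= 1)) => // [x z x_le1 _|k _].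
    by rewrite ge_min x_le1.
  by rewrite ge_min; case: (lerP (alpha k) 1) => //= a_gt1; lra.
by rewrite -{1}sqrtr1 ler_sqrt ?ler1n.
Qed.

Theorem theorem1 (R : realType) (m : nat) (alpha : 'I_m -> R)
  (eta Rb : R) (th1 : 'I_m -> R) (b : nat -> 'I_m -> R) (y : nat -> R)
  (thtil th q : nat -> 'I_m -> R) :
  (0 < m)%N ->
  (forall i j : 'I_m, (i < j)%N -> alpha i < alpha j) ->
  (forall i, 0 < alpha i < 1) ->
  (forall t, inK (b t)) ->
  0 < Rb ->
  (forall t i, `|y t - b t i| <= Rb) ->
  0 < eta ->
  inK th1 ->
  multiqt_run alpha eta th1 b y thtil th q ->
  forall (T : nat), (1 <= T)%N -> forall i : 'I_m,
    `| (\sum_(t < T) cov (y t) (q t) i) / T%:R - alpha i |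
      <= 2 * norm2 th1 / (eta * T%:R)
         + Num.sqrt (m%:R / T%:R
                     + 2 * Rb * (m%:R * Num.sqrt m%:R) / (eta * dA alpha * T%:R)).
Proof.
move=> m_gt0 alpha_inc alpha_in _ Rb_gt0 y_near eta_gt0 _ run T T_gt0 i.
have alpha_mono : {homo alpha : i j / (i <= j)%N >-> i <= j} := ltW_homo alpha_inc.
have alpha_01 k : 0 <= alpha k <= 1 by have /andP[? ?] := alpha_in k; rewrite !ltW.
have dA_pos := dA_gt0 alpha_in.
have T_pos : 0 < T%:R :> R by rewrite ltr0n.
have [Rb_ge0 eta_ge0 dA_ge0 T_ge0] :=
  And4 (ltW Rb_gt0) (ltW eta_gt0) (ltW dA_pos) (ltW T_pos).
apply: le_trans (coverage_error_le alpha_mono alpha_01 y_near Rb_ge0 eta_gt0 run i T_gt0) _.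
have -> : 2 * Rb * m%:R / (eta * T%:R)
        = 2 * Rb * (m%:R * dA alpha) / (eta * dA alpha * T%:R).
  by field; rewrite !gt_eqF.
rewrite lerD2l ler_sqrt ?addr_ge0 ?divr_ge0 ?mulr_ge0 ?sqrtr_ge0 // lerD2l.
rewrite ler_wpM2r ?invr_ge0 ?mulr_ge0 // ler_wpM2l ?mulr_ge0 // ler_wpM2l //.
exact: dA_le_sqrt_card.
Qed.
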